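(* Let $R=4t\ge8$ with $t$ an integer, and $\mu=4$ (so $\gcd(R,4)=4$). Then under $G_{R,4}$ the ring $\mathbb Z_R$ has exactly three orbits: $O_0=\{\lambda:\lambda\equiv0\pmod4\}$, $O_1=\{\lambda:\lambda\equiv1\pmod2\}$ and $O_2=\{\lambda:\lambda\equiv2\pmod4\}$; $\mathrm P^+_{R,4}(\lambda)=\mathrm P^+_{R,4}(k)$ for all $\lambda\in O_k$, $k=0,1,2$; these values satisfy $$\mathrm P^+_{R,4}(0)+2\mathrm P^+_{R,4}(1)+\mathrm P^+_{R,4}(2)=\binom{R-1}{3},\quad \mathrm P^+_{R,4}(0)-\mathrm P^+_{R,4}(1)=\frac{R-4}{4},\quad \mathrm P^+_{R,4}(0)-\mathrm P^+_{R,4}(2)=-1,$$ and hence $\mathrm P^+_{R,4}(0)=\frac14\left(\binom{R-1}{3}+\frac{R-6}{2}\right)$, $\mathrm P^+_{R,4}(1)=\frac14\left(\binom{R-1}{3}-\frac{R-2}{2}\right)$, $\mathrm P^+_{R,4}(2)=\frac14\left(\binom{R-1}{3}+\frac{R+2}{2}\right)$.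
   Context: $\mathbb Z_R$ is the ring of integers modulo $R$ and $\mathbb Z_R^*$ its units; $\mathrm P^+_{R,\mu}(\lambda)$ is the number of $\mu$-element subsets of $\mathbb Z_R$ (distinct elements) whose sum in $\mathbb Z_R$ is $\lambda$. $G_{R,\mu}$ is the group of maps $\lambda\mapsto\lambda\ell+u\mu$ on $\mathbb Z_R$ with $\ell\in\mathbb Z_R^*$, $u\in\{0,\dots,R-1\}$; orbits are the equivalence classes of ''$\lambda_2=\lambda_1\varphi$ for some $\varphi\in G_{R,\mu}$''. *)

(* Z_R is modelled by residues lambda in {0,...,R-1} (nat),
   elements of Z_R as 'I_R, arithmetic taken mod R. *)
From mathcomp Require Import all_boot all_order all_algebra.
Set Implicit Arguments. Unset Strict Implicit. Unset Printing Implicit Defensive.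

Definition Pplus (R mu lambda : nat) : nat :=
  #|[set A : {set 'I_R} | (#|A| == mu) && ((\sum_(x in A) (x : nat)) %% R == lambda %% R)]|.

(* The map lambda |-> lambda*l + u*mu on Z_R, an element of G_{R,mu}
   when l is a unit of Z_R and 0 <= u <= R-1. *)
Definition Gmap (R mu l u lambda : nat) : nat := (lambda * l + u * mu) %% R.

Definition in_G (R l u : nat) : Prop := l < R /\ coprime l R /\ u < R.

Definition same_orbit (R mu lambda1 lambda2 : nat) : Prop :=
  exists l u, in_G R l u /\ lambda2 = Gmap R mu l u lambda1.

Definition orbit_index (lambda : nat) : nat :=
  if odd lambda then 1 else lambda %% 4.

From mathcomp Require Import all_boot all_order all_algebra.
Import GRing.Theory Num.Theory.
From mathcomp Require Import algC zify ring lra.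

(* The maps of G_{R,4} have odd multiplier, so they preserve a residue mod 4 up to sign;
   this gives the three orbits.  Translating a 4-subset of Z_R by c adds 4c to its sum
   and reflecting it through c turns a sum l into 4c - l, so P^+_{R,4}(l) only depends
   on the orbit index of l.  Summing e^(sum A) over the 4-subsets A of Z_R for a fourth
   root of unity e gives t (P0 + P1 e + P2 e^2 + P1 e^3).  For e = 1 the sum is C(R, 4);
   for e = -1, i it is the coefficient of X^4 in prod_(x < R) (1 + e^x X), that is in
   (1 - X^2)^(2t), resp. (1 - X^4)^t, namely C(2t, 2), resp. -t.  The three resulting
   linear equations determine P0, P1 and P2. *)

Lemma orbit_index_mod4 x : orbit_index (x %% 4) = orbit_index x.
Proof. by rewrite /orbit_index odd_mod // modn_mod. Qed.

Lemma orbit_index_mulr_odd x l : odd l -> orbit_index (x * l) = orbit_index x.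
Proof.
move=> l_odd; rewrite /orbit_index oddM l_odd andbT; case: ifP => // /negbT.
rewrite -dvdn2 => /dvdnP [y ->].
have [k ->] : exists k, l = k.*2.+1 by exists l./2; rewrite -[in LHS](odd_double_half l) l_odd.
lia.
Qed.

Lemma orbit_index_Gmap R l u x : 4 %| R -> coprime l R ->
  orbit_index (Gmap R 4 l u x) = orbit_index x.
Proof.
move=> four_R cop; have l_odd : odd l.
  by rewrite -coprimen2 (coprime_dvdr _ cop) // (dvdn_trans _ four_R).
rewrite -orbit_index_mod4 /Gmap modn_dvdm // addnC modnMDl orbit_index_mod4.
exact: orbit_index_mulr_odd.
Qed.

Lemma same_orbit_of_congr R mu l x y : mu %| R -> l < R -> coprime l R -> y < R ->
  x * l = y %[mod mu] -> same_orbit R mu x y.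
Proof.
move=> mu_R l_lt cop y_lt xl_y; have R_gt0 : 0 < R by apply: leq_ltn_trans l_lt.
set m := x * l %% R; have m_le : m <= y + R by rewrite ltnW ?ltn_addl ?ltn_pmod.
set d := (y + R - m) %% R.
have mu_d : mu %| d.
  rewrite /dvdn /d modn_dvdm // -/(dvdn _ _) -eqn_mod_dvd //.
  by rewrite -modnDmr (eqP mu_R) addn0 modn_dvdm // xl_y.
exists l, (d %/ mu); split.
  by split=> //; split=> //; apply: leq_ltn_trans (leq_div _ _) (ltn_pmod _ _).
by rewrite /Gmap divnK // -modnDml -/m modnDmr subnKC // modnDr modn_small.
Qed.

Lemma orbit_index_eq_mod4 x y : orbit_index x = orbit_index y ->
  x = y %[mod 4] \/ x + y = 0 %[mod 4].
Proof.
rewrite -(orbit_index_mod4 x) -(orbit_index_mod4 y) -modnDm.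
case: (x %% 4) (ltn_pmod x (isT : 0 < 4)) => [|[|[|[|r]]]] // _;
case: (y %% 4) (ltn_pmod y (isT : 0 < 4)) => [|[|[|[|s]]]] // _;
by [left | right | case].
Qed.

Lemma same_orbit4P R x y : 4 %| R -> x < R -> y < R ->
  same_orbit R 4 x y <-> orbit_index x = orbit_index y.
Proof.
move=> four_R x_lt y_lt; have R_gt0 : 0 < R by apply: leq_ltn_trans x_lt.
split=> [[l [u [[_ [cop _]] ->]]] | /orbit_index_eq_mod4 [xy | xy0]].
- by rewrite orbit_index_Gmap.
- apply: (@same_orbit_of_congr _ _ 1); rewrite ?coprime1n ?muln1 //.
  exact: leq_trans (isT : 1 < 4) (dvdn_leq R_gt0 four_R).
- apply: (@same_orbit_of_congr _ _ R.-1); rewrite ?prednK ?coprimePn //.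
  have xl_x : x * R.-1 + x = 0 %[mod 4].
    by rewrite -{2}(muln1 x) -mulnDr addn1 prednK // mod0n; apply/eqP/dvdn_mull.
  by apply/eqP; rewrite -(eqn_modDr x) xl_x addnC xy0.
Qed.

Lemma Pplus_modn R mu l : Pplus R mu (l %% R) = Pplus R mu l.
Proof. by rewrite /Pplus modn_mod. Qed.

Lemma leq_Pplus_inj R mu l m (f : 'I_R -> 'I_R) : injective f ->
  (forall A : {set 'I_R}, #|A| = mu -> \sum_(x in A) (x : nat) = l %[mod R] ->
     \sum_(x in A) (f x : nat) = m %[mod R]) ->
  Pplus R mu l <= Pplus R mu m.
Proof.
move=> f_inj f_sum; rewrite /Pplus -(card_imset _ (imset_inj f_inj)).
apply/subset_leq_card/subsetP => B /imsetP [A]; rewrite inE => /andP [/eqP cardA /eqP sumA] ->.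
rewrite inE card_imset // cardA eqxx big_imset /=; last by move=> x y _ _ /f_inj.
by apply/eqP/f_sum.
Qed.

Lemma Pplus_translate R mu c l : 0 < R -> Pplus R mu (l + mu * c) = Pplus R mu l.
Proof.
move=> R_gt0.
have le_translate c' l' : Pplus R mu l' <= Pplus R mu (l' + mu * c').
  pose f (x : 'I_R) : 'I_R := Ordinal (ltn_pmod (x + c') R_gt0).
  apply: (@leq_Pplus_inj _ _ _ _ f) => [x y /(congr1 val) /eqP /= | A cardA sumA].
    by rewrite eqn_modDr !modn_small // => /eqP /val_inj.
  rewrite (eq_bigr (fun x : 'I_R => (x + c') %% R)) // modn_summ big_split /=.
  by rewrite sum_nat_const cardA -modnDml sumA modnDml.
apply/eqP; rewrite eqn_leq le_translate andbT -[leqRHS]Pplus_modn.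
(* [R - 1] further translations by [c] lead back to [l] modulo [R]. *)
apply: leq_trans (le_translate (c * R.-1) _) _; rewrite -Pplus_modn.
have -> : l + mu * c + mu * (c * R.-1) = mu * c * R + l by nia.
by rewrite modnMDl.
Qed.

Lemma Pplus_reflect R mu c l m : 0 < R -> l + m = mu * c %[mod R] ->
  Pplus R mu l = Pplus R mu m.
Proof.
move=> R_gt0.
have le_reflect l' m' (lm : l' + m' = mu * c %[mod R]) : Pplus R mu l' <= Pplus R mu m'.
  pose f (x : 'I_R) : 'I_R := Ordinal (ltn_pmod (c + (R - x)) R_gt0).
  apply: (@leq_Pplus_inj _ _ _ _ f) => [x y /(congr1 val) /eqP /= | A cardA sumA].
    rewrite eqn_modDl -(eqn_modDr (x + y)) addnA subnK ?(ltnW (ltn_ord x)) //.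
    rewrite [x + y]addnC addnA subnK ?(ltnW (ltn_ord y)) // eqn_modDl !modn_small //.
    by move=> /eqP /val_inj.
  apply/eqP; rewrite -(eqn_modDr l') -modnDmr -sumA modnDmr.
  rewrite (eq_bigr (fun x : 'I_R => (c + (R - x)) %% R)) // -modnDml modn_summ.
  rewrite modnDml -big_split /= (eq_bigr (fun => c + R)) => [|x _]; last first.
    by rewrite -addnA subnK // ltnW.
  by rewrite sum_nat_const cardA mulnDr -modnDmr modnMl addn0 addnC lm.
by move=> lm; apply/eqP; rewrite eqn_leq !le_reflect // addnC.
Qed.

Lemma Pplus4_orbit_index R l : 0 < R -> Pplus R 4 l = Pplus R 4 (orbit_index l).
Proof.
move=> R_gt0.
rewrite -orbit_index_mod4 {1}(divn_eq l 4) addnC [_ * 4]mulnC Pplus_translate //.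
case: (l %% 4) (ltn_pmod l (isT : 0 < 4)) => [|[|[|[|//]]]] // _.
exact: (@Pplus_reflect _ _ 1).
Qed.

Lemma big_nat_periodic (R : Type) (idx : R) (op : Monoid.law idx) (f : nat -> R) p n :
  (forall i, f (i + p) = f i) ->
  \big[op/idx]_(0 <= i < n * p) f i = \big[op/idx]_(0 <= j < n) \big[op/idx]_(0 <= i < p) f i.
Proof.
move=> f_per; have f_perM j i : f (i + j * p) = f i.
  by elim: j => [|j IHj]; rewrite ?addn0 // mulSn addnCA addnC f_per.
rewrite big_nat_mul; apply: eq_bigr => j _.
by rewrite -{1}(add0n (j * p)) big_addn mulSn addnK; apply: eq_bigr => i _.
Qed.

Section GeneratingFunction.

Local Open Scope ring_scope.

Lemma eq_of_subr_eq (V : zmodType) (a b c d : V) : c = d -> a - b = c - d -> a = b.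
Proof. by move=> ->; rewrite subrr => /eqP; rewrite subr_eq0 => /eqP. Qed.

Lemma coef_prod_scaleXD1 (S : comNzRingType) (T : finType) (w : T -> S) k :
  (\prod_(x : T) (w x *: 'X + 1))`_k = \sum_(A : {set T} | #|A| == k) \prod_(x in A) w x.
Proof.
rewrite (@bigA_distr _ 0 1 *%R +%R) /=.
rewrite (eq_bigr (fun A : {set T} => (\prod_(x in A) w x) *: 'X^#|A|)) => [|A _].
  by rewrite coef_sumMXn.
by rewrite -big_mkcond /= scaler_prod prodr_const.
Qed.

Lemma sum_expr_subset_sum_coef (S : comNzRingType) n k (e : S) :
  \sum_(A : {set 'I_n} | #|A| == k) e ^+ (\sum_(x in A) x) =
  (\prod_(0 <= x < n) (e ^+ x *: 'X + 1))`_k.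
Proof.
rewrite big_mkord coef_prod_scaleXD1; apply: eq_bigr => A _.
by rewrite prodrXr.
Qed.

Lemma sum_expr_subset_sum_Pplus (S : comNzRingType) R k (e : S) : (0 < R)%N -> e ^+ R = 1 ->
  \sum_(A : {set 'I_R} | #|A| == k) e ^+ (\sum_(x in A) x) =
  \sum_(j < R) (Pplus R k j)%:R * e ^+ j.
Proof.
move=> R_gt0 eR.
rewrite (partition_big (fun A : {set 'I_R} => Ordinal (ltn_pmod (\sum_(x in A) x) R_gt0)) predT) //=.
apply: eq_bigr => j _; rewrite (eq_bigr (fun _ => e ^+ j)) => [|A /andP [_ /eqP <-] /=]; last first.
  by rewrite expr_mod.
rewrite sumr_const mulr_natl /Pplus; congr (_ *+ _); apply: eq_card => A.
by rewrite !inE (modn_small (ltn_ord j)).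
Qed.

Lemma sum_Pplus4_expr (S : comNzRingType) t (e : S) : (0 < t)%N -> e ^+ 4 = 1 ->
  \sum_(j < 4 * t) (Pplus (4 * t) 4 j)%:R * e ^+ j =
  ((Pplus (4 * t) 4 0)%:R + (Pplus (4 * t) 4 1)%:R * e + (Pplus (4 * t) 4 2)%:R * e ^+ 2
    + (Pplus (4 * t) 4 1)%:R * e ^+ 3) *+ t.
Proof.
move=> t_gt0 e4.
transitivity (\sum_(0 <= j < t * 4) (Pplus (4 * t) 4 (orbit_index j))%:R * e ^+ j).
  rewrite [(t * 4)%N]mulnC big_mkord; apply: eq_bigr => j _.
  by rewrite -Pplus4_orbit_index ?muln_gt0.
rewrite big_nat_periodic => [|j]; last first.
  by rewrite exprD e4 mulr1 -orbit_index_mod4 modnDr orbit_index_mod4.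
by rewrite sumr_const_nat subn0 !big_nat_recr //= big_geq // add0r expr0 mulr1 expr1.
Qed.

Lemma coef_one_subXn_exp (S : comNzRingType) m n : (0 < m)%N ->
  let p := (1 - 'X^m : {poly S}) ^+ n in
  [/\ p`_0 = 1, p`_m = - n%:R & p`_(m.*2) = 'C(n, 2)%:R].
Proof.
move=> m_gt0; elim: n => [|n [p0 pm p2m]] /=.
  by rewrite expr0 !coef1 double_eq0 (gtn_eqF m_gt0) oppr0.
rewrite exprS mulrBl mul1r !coefB !coefXnM m_gt0 ltnn subnn p0 pm p2m.
rewrite -addnn ltnNge leq_addr addnK pm subr0 binS bin1 natrD opprK.
by split=> //; rewrite mulrSr opprD.
Qed.

Lemma prod_scaleXD1_sqrtN1 (S : comNzRingType) (e : S) : e ^+ 2 = -1 ->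
  \prod_(0 <= x < 4) (e ^+ x *: 'X + 1) = 1 - 'X^4 :> {poly S}.
Proof.
move=> e2; rewrite !big_nat_recr //= big_geq // mul1r expr0 expr1.
rewrite (exprS e 2) e2 mulrN1 scale1r scaleN1r scaleNr -mul_polyC.
have eP2 : e%:P * e%:P = -1 :> {poly S} by rewrite -polyCM -expr2 e2 polyCN.
have -> : ('X + 1) * (e%:P * 'X + 1) * (- 'X + 1) * (- (e%:P * 'X) + 1) =
  (1 - 'X ^+ 2) * (1 - e%:P * e%:P * 'X ^+ 2) :> {poly S} by ring.
by rewrite eP2; ring.
Qed.

Lemma prod_scaleXD1_N1 (S : comNzRingType) :
  \prod_(0 <= x < 2) ((-1) ^+ x *: 'X + 1) = 1 - 'X^2 :> {poly S}.
Proof. by rewrite !big_nat_recr //= big_geq // mul1r expr0 expr1 scale1r scaleN1r; ring. Qed.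

Lemma sum_expr_subset_sum_periodic (S : comNzRingType) p n k (e : S) : e ^+ p = 1 ->
  \sum_(A : {set 'I_(p * n)} | #|A| == k) e ^+ (\sum_(x in A) x) =
  ((\prod_(0 <= x < p) (e ^+ x *: 'X + 1)) ^+ n)`_k.
Proof.
move=> ep; rewrite sum_expr_subset_sum_coef mulnC big_nat_periodic => [|x].
  by rewrite prodr_const_nat subn0.
by rewrite exprD ep mulr1.
Qed.

End GeneratingFunction.

Section Pplus4.

Local Open Scope ring_scope.

Variable t : nat.
Hypothesis t_gt0 : (0 < t)%N.
Local Notation P k := (Pplus (4 * t) 4 k).

Lemma Pplus4_filter (S : comNzRingType) (e : S) : e ^+ 4 = 1 ->
  \sum_(A : {set 'I_(4 * t)} | #|A| == 4%N) e ^+ (\sum_(x in A) x) =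
  ((P 0)%:R + (P 1)%:R * e + (P 2)%:R * e ^+ 2 + (P 1)%:R * e ^+ 3) *+ t.
Proof.
move=> e4; rewrite sum_expr_subset_sum_Pplus ?muln_gt0 ?sum_Pplus4_expr //.
by rewrite exprM e4 expr1n.
Qed.

Lemma Pplus4_total : (P 0 + 2 * P 1 + P 2 = 'C(4 * t - 1, 3))%N.
Proof.
have := @Pplus4_filter algC 1 (expr1n _ 4).
rewrite (eq_bigr (fun => 1)) => [|A _]; last by rewrite expr1n.
rewrite sumr_const (eq_card (B := [set A : {set 'I_(4 * t)} | #|A| == 4%N])) => [|A]; last by rewrite inE.
rewrite card_draws card_ord => total.
have {}total : ('C(4 * t, 4) = (P 0 + 2 * P 1 + P 2) * t)%N.
  apply/eqP; rewrite -(eqr_nat algC) total !natrM !natrD !expr1n -mulr_natr.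
  by apply/eqP; ring.
apply/eqP; rewrite -(eqn_pmul2l (_ : 0 < 4 * t)%N) ?muln_gt0 //.
by rewrite subn1 mul_bin_diag total; apply/eqP; ring.
Qed.

Lemma Pplus4_2E : P 2 = (P 0).+1.
Proof.
have i4 : 'i ^+ 4 = 1 :> algC by rewrite (exprM _ 2 2) sqrCi sqrrN expr1n.
have := @Pplus4_filter algC 'i i4.
rewrite sum_expr_subset_sum_periodic // prod_scaleXD1_sqrtN1 ?sqrCi //.
have [_ -> _] := coef_one_subXn_exp algC 4 t isT.
rewrite [_ ^+ 3]exprS sqrCi => filter_i.
apply/eqP; rewrite -(eqn_pmul2r t_gt0) -(eqr_nat algC); apply/eqP.
apply: (@eq_of_subr_eq algC _ _ _ _ filter_i).
rewrite !natrM mulrS -mulr_natr; ring.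
Qed.

Lemma Pplus4_alternating : ((P 0 + P 2).+1 = 2 * (P 1 + t))%N.
Proof.
have N1_2 : (-1) ^+ 2 = 1 :> algC by rewrite sqrrN expr1n.
have N1_4 : (-1) ^+ 4 = 1 :> algC by rewrite (exprM _ 2 2) N1_2 expr1n.
have := @Pplus4_filter algC (-1) N1_4.
have := @sum_expr_subset_sum_periodic algC 2 (2 * t) 4 (-1) N1_2.
rewrite mulnA => ->; rewrite prod_scaleXD1_N1 N1_2 [_ ^+ 3]exprS N1_2.
have [_ _ ->] := coef_one_subXn_exp algC 2 (2 * t) isT.
move=> filter_N1.
have count : ('C(2 * t, 2) + 2 * P 1 * t = (P 0 + P 2) * t)%N.
  apply/eqP; rewrite -(eqr_nat algC); apply/eqP.
  apply: (@eq_of_subr_eq algC _ _ _ _ filter_N1).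
  rewrite !natrM !natrD -mulr_natr; ring.
have bin2_double : ('C(2 * t, 2) + t = 2 * t * t)%N.
  rewrite bin2 -mulnA mul2n doubleK; nia.
apply/eqP; rewrite -(eqn_pmul2r t_gt0); apply/eqP; nia.
Qed.

End Pplus4.

Theorem theorem4p13 (t : nat) (ht : 2 <= t) :
  let R := 4 * t in
  let P0 := Pplus R 4 0 in
  let P1 := Pplus R 4 1 in
  let P2 := Pplus R 4 2 in
  (* exactly three orbits O_0, O_1, O_2 *)
  (forall lambda1 lambda2, lambda1 < R -> lambda2 < R ->
     same_orbit R 4 lambda1 lambda2 <-> orbit_index lambda1 = orbit_index lambda2)
  /\ (forall lambda, lambda < R -> Pplus R 4 lambda = Pplus R 4 (orbit_index lambda))
  /\ (P0 + 2 * P1 + P2 = 'C(R - 1, 3))%N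
  /\ (P0%:Q - P1%:Q = (R%:Q - 4) / 4)%R
  /\ (P0%:Q - P2%:Q = -1)%R
  /\ (P0%:Q = ('C(R - 1, 3)%:Q + (R%:Q - 6) / 2) / 4)%R
  /\ (P1%:Q = ('C(R - 1, 3)%:Q - (R%:Q - 2) / 2) / 4)%R
  /\ (P2%:Q = ('C(R - 1, 3)%:Q + (R%:Q + 2) / 2) / 4)%R.
Proof.
have t_gt0 : 0 < t by apply: leq_trans ht.
move=> R P0 P1 P2; rewrite {}/P0 {}/P1 {}/P2 {}/R.
have sum_P := Pplus4_total t t_gt0.
have P2_succ := Pplus4_2E t t_gt0.
have alt_P := Pplus4_alternating t t_gt0.
have four_R : 4 %| 4 * t by apply: dvdn_mulr.
split; first by move=> x y; apply: same_orbit4P.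
split; first by move=> l _; rewrite -Pplus4_orbit_index ?muln_gt0.
split; first exact: sum_P.
have natQ (m n : nat) : m = n -> (m%:Q = n%:Q)%R by move=> ->.
move: sum_P P2_succ alt_P => /natQ sum_P /natQ P2_succ /natQ alt_P.
by repeat split; lra.
Qed.
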